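(* Let $S$ be an additively reduced semidomain and $G$ a torsion-free abelian group. Let $f=\sum_{i=0}^n s_ix^{g_i}\in S[G]$ (with $g_0>g_1>\dots>g_n$ and $s_i\in S\setminus\{0\}$) satisfy $|\operatorname{supp}(f)|>1$. Then $f$ is irreducible if and only if $f$ is monolithic and $1\in\gcd(\{s_0,s_1,\dots,s_n\})$.
   Context: A semidomain is a subsemiring (containing $0$ and $1$) of an integral domain; all semirings are commutative. $S$ is additively reduced if $0$ is the only invertible element of $(S,+)$; $S^\times$ is the unit group of the multiplicative monoid $S\setminus\{0\}$. $G$ carries a fixed total order compatible with addition. $S[G]$ is the semidomain of formal finite sums $\sum_{g\in G}s_gx^g$ with polynomial operations; $\operatorname{supp}(f)$ is the set of exponents with nonzero coefficient. $f$ is irreducible if it is nonzero, a nonunit of $S[G]$, and $f=pq$ implies $p$ or $q$ is a unit. A nonzero $f\in S[G]$ is monolithic if whenever $f=pq$ with $p,q\in S[G]$, one of $p,q$ is a monomial $sx^g$. For $B\subseteq S\setminus\{0\}$, $\gcd(B)$ is the set of greatest common divisors of $B$ in the multiplicative monoid $S\setminus\{0\}$; thus $1\in\gcd(B)$ means every common divisor of all elements of $B$ is a unit of $S$. *)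

From HB Require Import structures.
From mathcomp Require Import all_boot all_order all_algebra.
From mathcomp Require Import finmap.
Set Implicit Arguments. Unset Strict Implicit. Unset Printing Implicit Defensive.
Import Order.TTheory GRing.Theory Num.Theory.
Local Open Scope ring_scope.

(* The group algebra R[G] over the integral domain R containing the semidomain
   S is modelled by finitely supported functions G -> R ({fsfun G -> R with 0});
   S[G] is the subset of those with all coefficients in S. *)
Notation gpoly G R := {fsfun G -> R with 0%R}.

Section GroupAlgebra.
Variables (R : idomainType) (G : zmodType) (S : {pred R}).

Definition inSG (f : gpoly G R) : Prop := forall g, f g \in S.

Definition gmul (p q : gpoly G R) : G -> R :=
  fun g => (\sum_(x <- finsupp p) p x * q (g - x))%R.

Definition gone : G -> R := fun g => if g == 0 then 1 else 0.

Definition gprod_eq (f p q : gpoly G R) : Prop := forall g, f g = gmul p q g.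

Definition unitSG (p : gpoly G R) : Prop :=
  inSG p /\ exists q : gpoly G R, inSG q /\ forall g, gmul p q g = gone g.

Definition nonzeroG (f : gpoly G R) : Prop := exists g, f g != 0.

Definition irreducibleSG (f : gpoly G R) : Prop :=
  nonzeroG f /\ ~ unitSG f /\
  forall p q, inSG p -> inSG q -> gprod_eq f p q -> unitSG p \/ unitSG q.

Definition monomialSG (p : gpoly G R) : Prop :=
  exists (s : R) (g : G), s \in S /\ forall h, p h = if h == g then s else 0.

Definition monolithic (f : gpoly G R) : Prop :=
  nonzeroG f /\
  forall p q, inSG p -> inSG q -> gprod_eq f p q -> monomialSG p \/ monomialSG q.

End GroupAlgebra.

Definition sdvd (R : idomainType) (S : {pred R}) (d b : R) : Prop :=
  exists c, [/\ c \in S, c != 0 & b = d * c].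

Definition is_gcdS (R : idomainType) (S : {pred R}) (B : R -> Prop) (d : R) : Prop :=
  [/\ d \in S, d != 0,
      (forall b, B b -> sdvd S d b) &
      (forall e, e \in S -> e != 0 -> (forall b, B b -> sdvd S e b) -> sdvd S e d)].

Definition coeffs_set (R : idomainType) (G : zmodType) (f : gpoly G R) : R -> Prop :=
  fun s => exists2 g, g \in finsupp f & s = f g.

From HB Require Import structures.
From mathcomp Require Import all_boot all_order all_algebra.
From mathcomp Require Import finmap.
Import Order.TTheory GRing.Theory Num.Theory.
Local Open Scope ring_scope.
Set Implicit Arguments. Unset Strict Implicit.

(* Comparing the largest and the smallest exponents of p and q in p q = 1
   shows that a unit of R[G] is a monomial s x^a.  Hence a nonmonomial f is a
   nonunit, a monomial factor s x^a of f is a unit iff s divides 1 in S, and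
   s x^a divides f iff s divides every coefficient of f; the equivalence
   follows.  Besides 0, 1 \in S, only the order on G and the absence of zero
   divisors in R are used. *)

Section GroupAlgebra.
Variables (R : idomainType) (G : zmodType).
Implicit Types (p q : gpoly G R) (s : R) (a b g : G).

Definition monomial_at p s a : Prop := forall h, p h = if h == a then s else 0.

Definition gmono s a : gpoly G R := [fsfun h in [fset a]%fset => s | 0].

Lemma gmonoE s a : monomial_at (gmono s a) s a.
Proof. by move=> h; rewrite fsfun_fun in_fset1. Qed.

Lemma monomial_at_card_finsupp p s a :
  monomial_at p s a -> (#|` finsupp p| <= 1)%N.
Proof.
move=> hp; rewrite -(cardfs1 a); apply/fsubset_leq_card/fsubsetP => x.
by rewrite mem_finsupp hp in_fset1; case: (x =P a) => // _; rewrite eqxx.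
Qed.

Lemma gmul_fset p q (A : {fset G}) g : (finsupp p `<=` A)%fset ->
  gmul p q g = \sum_(x <- A) p x * q (g - x).
Proof.
by move=> sA; apply: big_fset_incl => // x _ /fsfun_dflt ->; rewrite mul0r.
Qed.

Lemma gmul_monomiall p q s a :
  monomial_at p s a -> forall g, gmul p q g = s * q (g - a).
Proof.
move=> hp g; rewrite (@gmul_fset _ _ [fset a]%fset) ?big_seq_fset1 ?hp ?eqxx //.
apply/fsubsetP => x; rewrite mem_finsupp hp in_fset1.
by case: (x =P a) => // _; rewrite eqxx.
Qed.

Lemma gmul_monomialr p q s b :
  monomial_at q s b -> forall g, gmul p q g = p (g - b) * s.
Proof.
move=> hq g; have shift x : (g - x == b) = (x == g - b).
  by apply/eqP/eqP => [<- | ->]; rewrite opprB addrC subrK.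
rewrite (@gmul_fset _ _ (finsupp p `|` [fset g - b])%fset) ?fsubsetUl //.
rewrite (bigD1_seq (g - b)) ?fset_uniq ?in_fsetU ?in_fset1 ?eqxx ?orbT //=.
rewrite big1_seq ?addr0 ?hq ?shift ?eqxx // => x /andP[/negbTE xb _].
by rewrite hq shift xb mulr0.
Qed.

Lemma gmul_neq0_finsupp p q g : gmul p q g != 0 ->
  exists2 x, x \in finsupp p & g - x \in finsupp q.
Proof.
pose hit x := g - x \in finsupp q.
have [/hasP // | /hasPn none] := boolP (has hit (finsupp p)).
by rewrite /gmul big1_seq ?eqxx // => x /none /fsfun_dflt ->; rewrite mulr0.
Qed.

Record ordered_rel (le : rel G) : Prop := OrderedRel {
  ord_refl : reflexive le;
  ord_anti : antisymmetric le;
  ord_trans : transitive le;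
  ord_total : total le;
  ord_addr : forall a b c, le a b -> le (a + c) (b + c) }.

Lemma ordered_rel_converse le :
  ordered_rel le -> ordered_rel (fun x y => le y x).
Proof.
case=> refl anti trans total addr; split.
- exact: refl.
- by move=> x y /andP[yx xy]; apply: anti; rewrite xy yx.
- by move=> y x z yx zy; apply: trans zy yx.
- by move=> x y /=; rewrite orbC total.
- by move=> a b c; apply: addr.
Qed.

Definition is_top (le : rel G) (A : {fset G}) a : Prop :=
  a \in A /\ forall x, x \in A -> le x a.

Section Order.
Variables (le : rel G) (leP : ordered_rel le).

Lemma exists_top (A : {fset G}) x0 : x0 \in A -> exists a, is_top le A a.
Proof.
pose ge x y := le y x; have geP := ordered_rel_converse leP.
have := mem_sort ge A; have := sort_sorted (ord_total geP) A.
case: (sort ge A) => [_ /(_ x0) <- // | a t /= sorted_at memA _].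
exists a; split => [|x]; first by rewrite -memA mem_head.
rewrite -memA in_cons => /predU1P[-> | xt]; first exact: ord_refl leP a.
exact: allP (order_path_min (ord_trans geP) sorted_at) x xt.
Qed.

Lemma gmul_top_neq0 p q a b :
  is_top le (finsupp p) a -> is_top le (finsupp q) b -> gmul p q (a + b) != 0.
Proof.
move=> [ap amax] [bq bmax]; rewrite /gmul (bigD1_seq a) ?fset_uniq //=.
have -> : a + b - a = b by rewrite addrC addKr.
rewrite mem_finsupp in ap; rewrite mem_finsupp in bq.
rewrite big1_seq ?addr0 ?mulf_neq0 // => x /andP[xa xp].
rewrite (fsfun_dflt (f := q)) ?mulr0 //; apply/negP => /bmax.
move/(ord_addr leP (x - b)); rewrite addrA subrK addrK [b + _]addrC subrK => ax.
by apply: (negP xa); apply/eqP/(ord_anti leP); rewrite amax.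
Qed.

Lemma gmul_gone_top p q a b : gmul p q =1 @gone R G ->
  is_top le (finsupp p) a -> is_top le (finsupp q) b -> a + b = 0.
Proof.
move=> pq1 ta tb; have := gmul_top_neq0 ta tb.
by rewrite pq1 /gone; case: (a + b =P 0) => // _; rewrite eqxx.
Qed.

End Order.

Lemma gmul_gone_monomial le p q : ordered_rel le -> gmul p q =1 @gone R G ->
  exists a, monomial_at p (p a) a.
Proof.
move=> leP pq1; have geP := ordered_rel_converse leP.
have [x xp qx] : exists2 x, x \in finsupp p & 0 - x \in finsupp q.
  by apply: gmul_neq0_finsupp; rewrite pq1 /gone eqxx oner_neq0.
have [a1 ta1] := exists_top leP xp; have [b1 tb1] := exists_top leP qx.
have [a2 ta2] := exists_top geP xp; have [b2 tb2] := exists_top geP qx.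
have ab1 := gmul_gone_top leP pq1 ta1 tb1.
have ab2 := gmul_gone_top geP pq1 ta2 tb2.
move: ta1 tb1 ta2 tb2 => [_ a1max] [b1q _] [_ a2min] [_ b2min].
have a12 : le a1 a2.
  move: (ord_addr leP (a1 + a2) (b2min b1 b1q)).
  by rewrite addrCA [b2 + a2]addrC ab2 addr0 addrA [b1 + a1]addrC ab1 add0r.
exists a1 => h; case: (h =P a1) => [-> // | ha1]; apply: fsfun_dflt.
apply/negP => hp; apply: ha1; apply: (ord_anti leP); rewrite a1max //=.
exact: ord_trans leP _ _ _ a12 (a2min h hp).
Qed.

End GroupAlgebra.

Section Semidomain.
Variables (R : idomainType) (G : zmodType) (S : {pred R}) (S0 : 0 \in S).
Implicit Types (le : rel G) (p q f u : gpoly G R) (s : R) (a g : G).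

Lemma unitSG_monomialSG le p : ordered_rel le -> unitSG S p -> monomialSG S p.
Proof.
move=> leP [pS [q [_ pq1]]]; have [a pa] := gmul_gone_monomial leP pq1.
by exists (p a), a.
Qed.

Lemma monomial_unitSG p s a :
  s \in S -> monomial_at p s a -> unitSG S p <-> sdvd S s 1.
Proof.
move=> sS pa; split.
  case=> _ [q [qS pq1]]; move: (pq1 0).
  rewrite (gmul_monomiall _ pa) /gone eqxx sub0r => sq1.
  exists (q (- a)); split => //; apply: contra_eq_neq sq1 => ->.
  by rewrite mulr0 eq_sym oner_eq0.
case=> c [cS _ sc1]; split; first by move=> h; rewrite pa; case: ifP.
exists (gmono c (- a)); split; first by move=> h; rewrite gmonoE; case: ifP.
move=> g; rewrite (gmul_monomiall _ pa) gmonoE /gone subr_eq addNr.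
by case: ifP; rewrite ?mulr0.
Qed.

Lemma coeffs_sdvd f u s a : inSG S u -> (forall h, f h = s * u (h - a)) ->
  forall b, coeffs_set f b -> sdvd S s b.
Proof.
move=> uS fu _ [h hf ->]; exists (u (h - a)); split => //.
by move: hf; rewrite mem_finsupp fu mulf_eq0 negb_or => /andP[].
Qed.

Lemma common_divisor_factor f e : e \in S ->
  (forall b, coeffs_set f b -> sdvd S e b) ->
  exists2 u, inSG S u & forall h, f h = e * u h.
Proof.
move=> eS edvd; have quot h : exists c, (c \in S) && (f h == e * c).
  have [hf | hf] := boolP (h \in finsupp f).
    have [c [cS _ ->]] := edvd _ (ex_intro2 _ _ h hf erefl).
    by exists c; rewrite cS eqxx.
  by exists 0; rewrite S0 mulr0 fsfun_dflt ?eqxx.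
exists [fsfun h in finsupp f => xchoose (quot h) | 0] => h; rewrite fsfun_fun.
  by case: ifP => // _; case/andP: (xchooseP (quot h)).
case: ifP => [_ | /negbT/fsfun_dflt ->]; last by rewrite mulr0.
by case/andP: (xchooseP (quot h)) => _ /eqP.
Qed.

Lemma irreducibleSG_monolithic le f :
  ordered_rel le -> irreducibleSG S f -> monolithic S f.
Proof.
move=> leP [nzf [_ irr]]; split=> // p q pS qS fpq.
by case: (irr p q pS qS fpq) => /(unitSG_monomialSG leP); [left | right].
Qed.

Lemma irreducibleSG_gcd1 le f : 1 \in S -> ordered_rel le -> inSG S f ->
  (1 < #|` finsupp f|)%N -> irreducibleSG S f -> is_gcdS S (coeffs_set f) 1.
Proof.
move=> S1 leP fS supp_gt1 [_ [_ irr]]; split; rewrite ?oner_neq0 //.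
  move=> _ [g gf ->]; exists (f g); rewrite mul1r; split => //.
  by rewrite mem_finsupp in gf.
move=> e eS _ edvd; have [u uS fu] := common_divisor_factor eS edvd.
have monoS : inSG S (gmono e (0 : G)) by move=> h; rewrite gmonoE; case: ifP.
have fmu : gprod_eq f (gmono e 0) u.
  by move=> h; rewrite (gmul_monomiall _ (gmonoE e 0)) subr0.
case: (irr _ _ monoS uS fmu) => [/(monomial_unitSG eS (gmonoE e 0)) // |].
case/(unitSG_monomialSG leP) => s [b [_ /monomial_at_card_finsupp u_small]].
suff: (#|` finsupp f| <= #|` finsupp u|)%N.
  by move/leq_trans/(_ u_small); rewrite leqNgt supp_gt1.
apply/fsubset_leq_card/fsubsetP => h.
by rewrite !mem_finsupp fu mulf_eq0 negb_or => /andP[].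
Qed.

Lemma monolithic_gcd1_irreducibleSG le f : ordered_rel le ->
  (1 < #|` finsupp f|)%N -> monolithic S f -> is_gcdS S (coeffs_set f) 1 ->
  irreducibleSG S f.
Proof.
move=> leP supp_gt1 [nzf mon] [_ _ _ gcd1].
have monomial_factor_unit r u s a : inSG S u -> s \in S -> monomial_at r s a ->
    (forall h, f h = s * u (h - a)) -> unitSG S r.
  move=> uS sS ra fu; apply/(monomial_unitSG sS ra)/gcd1 => //.
    by case: nzf => h; rewrite fu; apply: contra_neq => ->; rewrite mul0r.
  exact: coeffs_sdvd uS fu.
split=> //; split.
  case/(unitSG_monomialSG leP) => s [a [_ /monomial_at_card_finsupp]].
  by rewrite leqNgt supp_gt1.
move=> p q pS qS fpq.
case: (mon p q pS qS fpq) => [[s [a [sS pa]]] | [t [b [tS qb]]]].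
  left; apply: (monomial_factor_unit p q s a) => // h.
  by rewrite fpq (gmul_monomiall _ pa).
right; apply: (monomial_factor_unit q p t b) => // h.
by rewrite fpq (gmul_monomialr _ qb) mulrC.
Qed.

End Semidomain.

Theorem lemma3p1
  (R : idomainType) (S : {pred R})
  (* S is a semidomain: a subsemiring of the integral domain R *)
  (hS0 : 0 \in S) (hS1 : 1 \in S)
  (SD : forall x y, x \in S -> y \in S -> x + y \in S)
  (SM : forall x y, x \in S -> y \in S -> x * y \in S)
  (* S is additively reduced *)
  (Sred : forall x, x \in S -> (exists2 y, y \in S & x + y = 0) -> x = 0)
  (G : zmodType)
  (* G is torsion-free *)
  (Gtf : forall (g : G) (n : nat), (0 < n)%N -> g *+ n = 0 -> g = 0)
  (* the fixed total order on G compatible with addition *)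
  (le : rel G)
  (le_refl : reflexive le) (le_anti : antisymmetric le) (le_trans : transitive le)
  (le_total : total le)
  (le_add : forall a b c, le a b -> le (a + c) (b + c))
  (f : gpoly G R) (fS : inSG S f)
  (hsupp : (1 < #|` finsupp f|)%N) :
  irreducibleSG S f <-> (monolithic S f /\ is_gcdS S (coeffs_set f) 1).
Proof.
have leP : ordered_rel le by split.
split => [irr | [mon gcd1]].
  split; first exact: irreducibleSG_monolithic leP irr.
  exact: (irreducibleSG_gcd1 hS0 hS1 leP fS hsupp irr).
exact: (monolithic_gcd1_irreducibleSG hS0 leP hsupp mon gcd1).
Qed.
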